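(* Let $S$ be a monoid, $A_S$ a right $S$-act, and $A_1\subseteq A_2\subseteq\cdots\subseteq A_n=A$ subacts. Then $A_S$ is artinian (resp. noetherian, Rees artinian, Rees noetherian) if and only if $A_1$ and all Rees factor acts $A_{i+1}/A_i$, $1\le i\le n-1$, are artinian (resp. noetherian, Rees artinian, Rees noetherian).
   Context: For a subact $B\subseteq A$, the Rees factor act $A/B$ is the quotient of $A$ by the Rees congruence $(B\times B)\cup\Delta_A$. A right $S$-act is artinian (noetherian) if its lattice of congruences satisfies the descending (ascending) chain condition; Rees artinian (Rees noetherian) if its subacts satisfy the descending (ascending) chain condition. *)

From Stdlib Require Import Arith Lia ClassicalEpsilon FunctionalExtensionality
  PropExtensionality ProofIrrelevance.

Set Implicit Arguments.

Record monoid := Monoid {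
  mcar :> Type;
  mmul : mcar -> mcar -> mcar;
  mone : mcar;
  mmulA : forall x y z, mmul x (mmul y z) = mmul (mmul x y) z;
  mmul1l : forall x, mmul mone x = x;
  mmul1r : forall x, mmul x mone = x
}.

Record ract (M : monoid) := RAct {
  acar :> Type;
  act : acar -> M -> acar;
  act1 : forall a, act a (mone M) = a;
  actM : forall a s t, act (act a s) t = act a (mmul M s t)
}.
Arguments act {M} r a s.

Section Acts.
Variable M : monoid.

Definition is_congruence (A : ract M) (r : A -> A -> Prop) : Prop :=
  (forall a, r a a) /\ (forall a b, r a b -> r b a) /\
  (forall a b c, r a b -> r b c -> r a c) /\
  (forall a b s, r a b -> r (act A a s) (act A b s)).

Arguments is_congruence {A} r.

Record cong (A : ract M) := Cong { crel :> A -> A -> Prop; crelP : is_congruence crel }.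

(* Subacts (subsets closed under the action; possibly empty). *)
Definition is_subact (A : ract M) (P : A -> Prop) : Prop :=
  forall a s, P a -> P (act A a s).

Arguments is_subact {A} P.

Record subact (A : ract M) := Subact { spred :> A -> Prop; spredP : is_subact spred }.

Definition sub_car (A : ract M) (B : subact A) := {a : A | B a}.

Definition sub_act_op (A : ract M) (B : subact A) (x : sub_car B) (s : M) : sub_car B :=
  exist _ (act A (proj1_sig x) s) (spredP B _ s (proj2_sig x)).

Lemma sub_act_1 (A : ract M) (B : subact A) (x : sub_car B) : sub_act_op x (mone M) = x.
Proof.
  destruct x as [a Ha]; unfold sub_act_op; simpl.
  apply eq_sig_hprop; [intros; apply proof_irrelevance | simpl; apply act1].
Qed.

Lemma sub_act_M (A : ract M) (B : subact A) (x : sub_car B) s t :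
  sub_act_op (sub_act_op x s) t = sub_act_op x (mmul M s t).
Proof.
  destruct x as [a Ha]; unfold sub_act_op; simpl.
  apply eq_sig_hprop; [intros; apply proof_irrelevance | simpl; apply actM].
Qed.

Definition sub_act (A : ract M) (B : subact A) : ract M :=
  @RAct M (sub_car B) (@sub_act_op A B) (@sub_act_1 A B) (@sub_act_M A B).

(* Restriction of a subact B of A to a subact C of A (the set B ∩ C viewed
   inside the act C); when B ⊆ C this is B as a subact of C. *)
Definition restrict (A : ract M) (B C : subact A) : subact (sub_act C).
Proof.
  refine (@Subact (sub_act C) (fun x => B (proj1_sig x)) _).
  intros x s Hx. simpl. apply (spredP B). exact Hx.
Defined.

Definition qcar (A : ract M) (r : cong A) := {X : A -> Prop | exists a, X = r a}.

Definition qrep (A : ract M) (r : cong A) (X : qcar r) : A :=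
  proj1_sig (constructive_indefinite_description _ (proj2_sig X)).

Lemma qrepP (A : ract M) (r : cong A) (X : qcar r) : proj1_sig X = r (qrep X).
Proof. unfold qrep; destruct (constructive_indefinite_description _ _); auto. Qed.

Definition qclass (A : ract M) (r : cong A) (a : A) : qcar r :=
  exist _ (r a) (ex_intro _ a eq_refl).

Definition q_act_op (A : ract M) (r : cong A) (X : qcar r) (s : M) : qcar r :=
  qclass r (act A (qrep X) s).

Lemma qclass_eq (A : ract M) (r : cong A) a b : r a b -> r a = r b.
Proof.
  destruct (crelP r) as [Hr [Hs [Ht _]]]; intros Hab.
  apply functional_extensionality; intro c; apply propositional_extensionality.
  split; intros H; eauto.
Qed.

Lemma qeq (A : ract M) (r : cong A) (X Y : qcar r) : proj1_sig X = proj1_sig Y -> X = Y.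
Proof. intros; apply eq_sig_hprop; auto; intros; apply proof_irrelevance. Qed.

Lemma q_act_1 (A : ract M) (r : cong A) (X : qcar r) : q_act_op X (mone M) = X.
Proof.
  apply qeq; unfold q_act_op, qclass; simpl; rewrite act1, qrepP; reflexivity.
Qed.

Lemma q_act_M (A : ract M) (r : cong A) (X : qcar r) s t :
  q_act_op (q_act_op X s) t = q_act_op X (mmul M s t).
Proof.
  apply qeq; unfold q_act_op at 1 3, qclass; simpl.
  rewrite <- actM. apply eq_sym, qclass_eq.
  destruct (crelP r) as [Hr [Hs [Ht Hc]]]. apply Hc.
  set (Y := q_act_op X s).
  assert (E : proj1_sig Y = r (qrep Y)) by apply qrepP.
  unfold Y, q_act_op, qclass at 1 in E; simpl in E.
  rewrite E. apply Hr.
Qed.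

Definition quot_act (A : ract M) (r : cong A) : ract M :=
  @RAct M (qcar r) (@q_act_op A r) (@q_act_1 A r) (@q_act_M A r).

Definition rees_rel (A : ract M) (B : subact A) (a b : A) : Prop :=
  (B a /\ B b) \/ a = b.

Lemma rees_rel_cong (A : ract M) (B : subact A) : is_congruence (rees_rel B).
Proof.
  unfold rees_rel; repeat split.
  - intros; right; reflexivity.
  - intros a b [[] | ->]; [left | right]; auto.
  - intros a b c [[] | ->] [[] | ->]; auto.
  - intros a b s [[Ha Hb] | ->]; [left; split; apply (spredP B); auto | right; auto].
Qed.

Definition rees_cong (A : ract M) (B : subact A) : cong A := @Cong A (rees_rel B) (rees_rel_cong B).

Definition rees_factor (A : ract M) (B : subact A) : ract M := quot_act (rees_cong B).

Definition artinian (A : ract M) : Prop :=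
  forall c : nat -> A -> A -> Prop,
    (forall n, is_congruence (c n)) ->
    (forall n a b, c (S n) a b -> c n a b) ->
    exists N, forall m, N <= m -> forall a b, c m a b <-> c N a b.

Definition noetherian (A : ract M) : Prop :=
  forall c : nat -> A -> A -> Prop,
    (forall n, is_congruence (c n)) ->
    (forall n a b, c n a b -> c (S n) a b) ->
    exists N, forall m, N <= m -> forall a b, c m a b <-> c N a b.

Definition rees_artinian (A : ract M) : Prop :=
  forall c : nat -> A -> Prop,
    (forall n, is_subact (c n)) ->
    (forall n a, c (S n) a -> c n a) ->
    exists N, forall m, N <= m -> forall a, c m a <-> c N a.

Definition rees_noetherian (A : ract M) : Prop :=
  forall c : nat -> A -> Prop,
    (forall n, is_subact (c n)) ->
    (forall n a, c n a -> c (S n) a) ->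
    exists N, forall m, N <= m -> forall a, c m a <-> c N a.

End Acts.

(* All four properties (artinian, noetherian, Rees artinian, Rees noetherian)
   are instances of one chain condition, on congruences or on subacts, read in
   the descending or ascending direction.  Each such property P is
   [ext_closed]:
   - it passes from A to A' along an injective homomorphism A' -> A
     (a chain in A' is transported to a chain in A by taking images);
   - it passes from A to A' along a surjective homomorphism A -> A'
     (a chain in A' is pulled back to a chain in A by taking preimages);
   - it holds for A as soon as it holds for a subact B and for A/B
     (a chain in A stabilises once its restrictions to B and its images in
     A/B do).
   For B ⊆ C ⊆ A the first two give that P(C) implies P(B) and P(C/B), and
   the third the converse, so P(C) <-> P(B) /\ P(C/B).  Induction along the
   series A_1 ⊆ ... ⊆ A_n = A then yields the theorem. *)

From Stdlib Require Import Arith Lia Classical ProofIrrelevance.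

Section ChainConditions.
Variable M : monoid.

(* A chain step in direction [d]: descending ([true]) means the later term
   [Y] is contained in the earlier one [X], ascending ([false]) the reverse. *)
Definition chain_step (d : bool) (X Y : Prop) : Prop := if d then (Y -> X) else (X -> Y).

Lemma chain_step_le d (X : nat -> Prop) :
  (forall n, chain_step d (X n) (X (S n))) -> forall n m, n <= m -> chain_step d (X n) (X m).
Proof.
  intros HX n m Hnm; induction Hnm as [|m _ IH].
  - destruct d; cbn; auto.
  - specialize (HX m); destruct d; cbn in *; auto.
Qed.

Definition cong_cc (d : bool) (A : ract M) : Prop :=
  forall c : nat -> A -> A -> Prop,
    (forall n, is_congruence _ (c n)) ->
    (forall n a b, chain_step d (c n a b) (c (S n) a b)) ->
    exists N, forall m, N <= m -> forall a b, c m a b <-> c N a b.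

Definition subact_cc (d : bool) (A : ract M) : Prop :=
  forall c : nat -> A -> Prop,
    (forall n, is_subact _ (c n)) ->
    (forall n a, chain_step d (c n a) (c (S n) a)) ->
    exists N, forall m, N <= m -> forall a, c m a <-> c N a.

Definition act_hom {A A' : ract M} (f : A -> A') : Prop :=
  forall a s, f (act A a s) = act A' (f a) s.

Lemma sig_val_inj {T : Type} {P : T -> Prop} (x y : sig P) : proj1_sig x = proj1_sig y -> x = y.
Proof.
  destruct x as [x Hx], y as [y Hy]; cbn; intros <-; f_equal; apply proof_irrelevance.
Qed.

Lemma subact_incl_hom {A : ract M} (B : subact A) : act_hom (fun x : sub_act B => proj1_sig x).
Proof. intros x s; reflexivity. Qed.

Lemma subact_incl_inj {A : ract M} {B : subact A} (x y : sub_act B) :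
  proj1_sig x = proj1_sig y -> x = y.
Proof. apply sig_val_inj. Qed.

Definition cong_image {A A' : ract M} (g : A' -> A) (r : A' -> A' -> Prop) (x y : A) : Prop :=
  x = y \/ exists x' y', g x' = x /\ g y' = y /\ r x' y'.

Definition cong_preimage {A A' : ract M} (f : A -> A') (r : A' -> A' -> Prop) (a b : A) : Prop :=
  r (f a) (f b).

Definition subact_image {A A' : ract M} (g : A' -> A) (c : A' -> Prop) (a : A) : Prop :=
  exists x, g x = a /\ c x.

Definition subact_preimage {A A' : ract M} (f : A -> A') (c : A' -> Prop) (a : A) : Prop :=
  c (f a).

(* The image of a congruence along an injective homomorphism is a congruence
   (the injectivity is what makes it transitive). *)
Lemma cong_image_cong {A A' : ract M} (g : A' -> A) (r : A' -> A' -> Prop) :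
  act_hom g -> (forall x y, g x = g y -> x = y) -> is_congruence _ r ->
  is_congruence _ (cong_image g r).
Proof.
  intros Hg Hinj [Rf [Sy [Tr Co]]]; unfold cong_image; repeat split.
  - intros x; left; reflexivity.
  - intros x y [->|(x' & y' & <- & <- & H)]; [left | right; exists y', x']; auto.
  - intros x y z [->|(x' & y' & <- & <- & H)] [<-|(y'' & z' & Ey & <- & H')].
    + left; reflexivity.
    + right; exists y'', z'; auto.
    + right; exists x', y'; auto.
    + apply Hinj in Ey; subst; right; exists x', z'; eauto.
  - intros x y s [->|(x' & y' & <- & <- & H)]; [left; reflexivity|].
    right; exists (act A' x' s), (act A' y' s); rewrite !Hg; auto.
Qed.

Lemma cong_image_app {A A' : ract M} (g : A' -> A) (r : A' -> A' -> Prop) :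
  (forall x y, g x = g y -> x = y) -> is_congruence _ r ->
  forall x y, cong_image g r (g x) (g y) <-> r x y.
Proof.
  intros Hinj [Rf _] x y; unfold cong_image; split.
  - intros [E|(x' & y' & Ex & Ey & H)].
    + apply Hinj in E; subst; apply Rf.
    + apply Hinj in Ex; apply Hinj in Ey; subst; exact H.
  - intros H; right; exists x, y; auto.
Qed.

Lemma cong_image_mono {A A' : ract M} (g : A' -> A) (r r' : A' -> A' -> Prop) :
  (forall x y, r x y -> r' x y) -> forall x y, cong_image g r x y -> cong_image g r' x y.
Proof.
  intros Hr x y [E|(x' & y' & Ex & Ey & H)]; [left | right; exists x', y']; auto.
Qed.

Lemma cong_preimage_cong {A A' : ract M} (f : A -> A') (r : A' -> A' -> Prop) :
  act_hom f -> is_congruence _ r -> is_congruence _ (cong_preimage f r).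
Proof.
  intros Hf [Rf [Sy [Tr Co]]]; unfold cong_preimage; repeat split; eauto.
  intros a b s H; rewrite !Hf; auto.
Qed.

Lemma subact_image_subact {A A' : ract M} (g : A' -> A) (c : A' -> Prop) :
  act_hom g -> is_subact _ c -> is_subact _ (subact_image g c).
Proof.
  intros Hg Hc a s (x & <- & H); exists (act A' x s); split; [apply Hg | apply Hc; exact H].
Qed.

Lemma subact_image_app {A A' : ract M} (g : A' -> A) (c : A' -> Prop) :
  (forall x y, g x = g y -> x = y) -> forall x, subact_image g c (g x) <-> c x.
Proof.
  intros Hinj x; split.
  - intros (x' & E & H); apply Hinj in E; subst; exact H.
  - intros H; exists x; auto.
Qed.

Lemma subact_preimage_subact {A A' : ract M} (f : A -> A') (c : A' -> Prop) :
  act_hom f -> is_subact _ c -> is_subact _ (subact_preimage f c).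
Proof. intros Hf Hc a s H; unfold subact_preimage; rewrite Hf; apply Hc; exact H. Qed.

Lemma cong_cc_embed d {A A' : ract M} (g : A' -> A) :
  act_hom g -> (forall x y, g x = g y -> x = y) -> cong_cc d A -> cong_cc d A'.
Proof.
  intros Hg Hinj HA c Hc Hm.
  destruct (HA (fun n => cong_image g (c n))) as [N HN].
  - intro n; apply cong_image_cong; auto.
  - intros n x y; specialize (Hm n); destruct d; unfold chain_step; apply cong_image_mono; exact Hm.
  - exists N; intros m Hm' x y.
    rewrite <- (cong_image_app g _ Hinj (Hc m)), <- (cong_image_app g _ Hinj (Hc N)); auto.
Qed.

Lemma subact_cc_embed d {A A' : ract M} (g : A' -> A) :
  act_hom g -> (forall x y, g x = g y -> x = y) -> subact_cc d A -> subact_cc d A'.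
Proof.
  intros Hg Hinj HA c Hc Hm.
  destruct (HA (fun n => subact_image g (c n))) as [N HN].
  - intro n; apply subact_image_subact; auto.
  - intros n a; destruct d; intros (x & E & H); exists x; (split; [exact E | exact (Hm n x H)]).
  - exists N; intros m Hm' x; rewrite <- !(subact_image_app g _ Hinj); auto.
Qed.

Lemma cong_cc_image d {A A' : ract M} (f : A -> A') :
  act_hom f -> (forall y, exists x, f x = y) -> cong_cc d A -> cong_cc d A'.
Proof.
  intros Hf Hsurj HA c Hc Hm.
  destruct (HA (fun n => cong_preimage f (c n))) as [N HN].
  - intro n; apply cong_preimage_cong; auto.
  - intros n a b; apply Hm.
  - exists N; intros m Hm' y z.
    destruct (Hsurj y) as [a <-], (Hsurj z) as [b <-]; exact (HN m Hm' a b).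
Qed.

Lemma subact_cc_image d {A A' : ract M} (f : A -> A') :
  act_hom f -> (forall y, exists x, f x = y) -> subact_cc d A -> subact_cc d A'.
Proof.
  intros Hf Hsurj HA c Hc Hm.
  destruct (HA (fun n => subact_preimage f (c n))) as [N HN].
  - intro n; apply subact_preimage_subact; auto.
  - intros n a; apply Hm.
  - exists N; intros m Hm' y; destruct (Hsurj y) as [a <-]; exact (HN m Hm' a).
Qed.

Section ReesFactor.
Variables (A : ract M) (B : subact A).

Let rees_class (a : A) : rees_factor B := qclass (rees_cong B) a.

(* The chosen representative of the Rees class of [a] is Rees-related to [a]:
   it is [a] itself unless [a] lies in [B]. *)
Lemma rees_rep (a : A) : rees_rel B a (qrep (rees_class a)).
Proof.
  pose proof (f_equal (fun F => F (qrep (rees_class a))) (qrepP (rees_class a))) as E.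
  cbn in E; rewrite E; right; reflexivity.
Qed.

Lemma rees_class_hom : act_hom rees_class.
Proof.
  intros a s; apply qeq, (qclass_eq (rees_cong B)); cbn.
  destruct (rees_rel_cong B) as (_ & _ & _ & Co); apply Co, rees_rep.
Qed.

Lemma rees_class_surj (X : rees_factor B) : exists a, rees_class a = X.
Proof. exists (qrep X); apply qeq; symmetry; exact (qrepP X). Qed.

(* The join of a congruence [c] with the Rees congruence of [B]. *)
Definition rees_join (c : A -> A -> Prop) (a b : A) : Prop :=
  c a b \/ exists b1 b2, B b1 /\ B b2 /\ c a b1 /\ c b b2.

Lemma rees_join_cong {c : A -> A -> Prop} : is_congruence _ c -> is_congruence _ (rees_join c).
Proof.
  intros [Rf [Sy [Tr Co]]]; unfold rees_join; repeat split.
  - intros a; left; auto.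
  - intros a b [H|(b1 & b2 & H)]; [left | right; exists b2, b1]; intuition.
  - intros a b e [H|(b1 & b2 & H1 & H2 & H3 & H4)] [H'|(b3 & b4 & H5 & H6 & H7 & H8)].
    + left; eauto.
    + right; exists b3, b4; eauto 6.
    + right; exists b1, b2; eauto 6.
    + right; exists b1, b4; eauto 6.
  - intros a b s [H|(b1 & b2 & H1 & H2 & H3 & H4)]; [left; auto|].
    right; exists (act A b1 s), (act A b2 s); repeat split; auto; apply (spredP B); auto.
Qed.

Lemma rees_join_rees {c : A -> A -> Prop} :
  is_congruence _ c -> forall a b, rees_rel B a b -> rees_join c a b.
Proof.
  intros [Rf _] a b [[Ha Hb]|<-]; [right; exists a, b | left]; auto.
Qed.

Lemma rees_join_mono (c c' : A -> A -> Prop) :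
  (forall a b, c a b -> c' a b) -> forall a b, rees_join c a b -> rees_join c' a b.
Proof.
  intros Hc a b [H|(b1 & b2 & H)]; [left | right; exists b1, b2]; intuition.
Qed.

Lemma cong_eq_of_rees (s t : A -> A -> Prop) :
  is_congruence _ s -> is_congruence _ t -> (forall a b, s a b -> t a b) ->
  (forall a b, B a -> B b -> (s a b <-> t a b)) ->
  (forall a b, rees_join s a b <-> rees_join t a b) ->
  forall a b, s a b <-> t a b.
Proof.
  intros [_ [Sy [Tr _]]] [_ [Sy' [Tr' _]]] Hst HB HJ a b; split; [apply Hst|].
  intros Hab; destruct (proj2 (HJ a b) (or_introl Hab)) as [H|(b1 & b2 & H1 & H2 & Ha1 & Hb2)];
    [exact H|].
  assert (Hb12 : s b1 b2).
  { apply HB; auto; eapply Tr'; [apply Sy', Hst, Ha1|]; eapply Tr'; [exact Hab | apply Hst, Hb2]. }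
  eapply Tr; [exact Ha1|]; eapply Tr; [exact Hb12 | apply Sy, Hb2].
Qed.

Definition quot_join (c : A -> A -> Prop) (X Y : rees_factor B) : Prop :=
  rees_join c (qrep X) (qrep Y).

Lemma quot_join_class (c : A -> A -> Prop) :
  is_congruence _ c -> forall a b, quot_join c (rees_class a) (rees_class b) <-> rees_join c a b.
Proof.
  intros Hc a b; unfold quot_join.
  destruct (rees_join_cong Hc) as (_ & Sy & Tr & _).
  pose proof (rees_join_rees Hc _ _ (rees_rep a)) as Ea.
  pose proof (rees_join_rees Hc _ _ (rees_rep b)) as Eb.
  split; intros H; eauto.
Qed.

Lemma quot_join_cong (c : A -> A -> Prop) : is_congruence _ c -> is_congruence _ (quot_join c).
Proof.
  intros Hc; destruct (rees_join_cong Hc) as (Rf & Sy & Tr & Co); unfold quot_join.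
  repeat split; eauto.
  intros X Y s H.
  change (quot_join c (rees_class (act A (qrep X) s)) (rees_class (act A (qrep Y) s))).
  apply quot_join_class; auto.
Qed.

Definition quot_union (c : A -> Prop) (X : rees_factor B) : Prop :=
  c (qrep X) \/ B (qrep X).

Lemma quot_union_class (c : A -> Prop) (a : A) :
  ~ B a -> quot_union c (rees_class a) <-> c a.
Proof.
  intros Ha; unfold quot_union.
  destruct (rees_rep a) as [[Ha' _]|<-]; [contradiction | tauto].
Qed.

Lemma quot_union_subact (c : A -> Prop) : is_subact _ c -> is_subact _ (quot_union c).
Proof.
  intros Hc X s H.
  change (quot_union c (rees_class (act A (qrep X) s))); unfold quot_union.
  destruct (rees_rep (act A (qrep X) s)) as [[_ HB]|<-]; [right; exact HB|].
  destruct H as [H|H]; [left; apply Hc | right; apply (spredP B)]; exact H.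
Qed.

(* A
   chain in [A] stabilises on [B] and after joining with the Rees congruence
   of [B]; comparable congruences agreeing in both respects are equal. *)
Lemma cong_cc_ext d : cong_cc d (sub_act B) -> cong_cc d (rees_factor B) -> cong_cc d A.
Proof.
  intros HB HF c Hc Hm.
  destruct (HB (fun n => cong_preimage (fun x : sub_act B => proj1_sig x) (c n))) as [N1 HN1].
  { intro n; apply cong_preimage_cong; [apply subact_incl_hom | apply Hc]. }
  { intros n x y; apply Hm. }
  destruct (HF (fun n => quot_join (c n))) as [N2 HN2].
  { intro n; apply quot_join_cong, Hc. }
  { intros n X Y; specialize (Hm n); destruct d; unfold chain_step; apply rees_join_mono; exact Hm. }
  exists (max N1 N2); intros m Hm' a b.
  assert (on_B : forall x y, B x -> B y -> (c m x y <-> c (max N1 N2) x y)).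
  { intros x y Hx Hy.
    pose proof (HN1 m ltac:(lia) (exist _ x Hx) (exist _ y Hy)) as E1.
    pose proof (HN1 (max N1 N2) ltac:(lia) (exist _ x Hx) (exist _ y Hy)) as E2.
    unfold cong_preimage in E1, E2; cbn in E1, E2; tauto. }
  assert (on_joins : forall x y, rees_join (c m) x y <-> rees_join (c (max N1 N2)) x y).
  { intros x y; rewrite <- !quot_join_class by apply Hc.
    rewrite (HN2 m), (HN2 (max N1 N2)) by lia; reflexivity. }
  assert (comparable : forall x y, chain_step d (c (max N1 N2) x y) (c m x y)).
  { intros x y; apply (chain_step_le d (fun k => c k x y)); [intro k; apply Hm | lia]. }
  destruct d; cbn in comparable.
  - apply cong_eq_of_rees; auto.
  - symmetry; apply cong_eq_of_rees; auto; intros; symmetry; auto.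
Qed.

(* The same for chains of subacts, splitting [A] into [B] and its complement. *)
Lemma subact_cc_ext d : subact_cc d (sub_act B) -> subact_cc d (rees_factor B) -> subact_cc d A.
Proof.
  intros HB HF c Hc Hm.
  destruct (HB (fun n => subact_preimage (fun x : sub_act B => proj1_sig x) (c n))) as [N1 HN1].
  { intro n; apply subact_preimage_subact; [apply subact_incl_hom | apply Hc]. }
  { intros n x; apply Hm. }
  destruct (HF (fun n => quot_union (c n))) as [N2 HN2].
  { intro n; apply quot_union_subact, Hc. }
  { intros n X; destruct d; (intros [H|H]; [left; exact (Hm n _ H) | right; exact H]). }
  exists (max N1 N2); intros m Hm' a.
  destruct (classic (B a)) as [Ha|Ha].
  - pose proof (HN1 m ltac:(lia) (exist _ a Ha)) as E1.
    pose proof (HN1 (max N1 N2) ltac:(lia) (exist _ a Ha)) as E2.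
    unfold subact_preimage in E1, E2; cbn in E1, E2; tauto.
  - rewrite <- (quot_union_class (c m) a Ha), <- (quot_union_class (c (max N1 N2)) a Ha).
    rewrite (HN2 m), (HN2 (max N1 N2)) by lia; reflexivity.
Qed.

End ReesFactor.

Record ext_closed (P : ract M -> Prop) : Prop := {
  ext_closed_embed : forall (A A' : ract M) (g : A' -> A),
    act_hom g -> (forall x y, g x = g y -> x = y) -> P A -> P A';
  ext_closed_image : forall (A A' : ract M) (f : A -> A'),
    act_hom f -> (forall y, exists x, f x = y) -> P A -> P A';
  ext_closed_ext : forall (A : ract M) (B : subact A),
    P (sub_act B) -> P (rees_factor B) -> P A
}.
Arguments ext_closed_embed {P}.
Arguments ext_closed_image {P}.
Arguments ext_closed_ext {P}.

Lemma cong_cc_ext_closed d : ext_closed (cong_cc d).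
Proof.
  split; [exact (@cong_cc_embed d) | exact (@cong_cc_image d) | exact (fun A B => cong_cc_ext A B d)].
Qed.

Lemma subact_cc_ext_closed d : ext_closed (subact_cc d).
Proof.
  split;
    [exact (@subact_cc_embed d) | exact (@subact_cc_image d) | exact (fun A B => subact_cc_ext A B d)].
Qed.

Lemma artinian_ext_closed : ext_closed (@artinian M).
Proof. exact (cong_cc_ext_closed true). Qed.

Lemma noetherian_ext_closed : ext_closed (@noetherian M).
Proof. exact (cong_cc_ext_closed false). Qed.

Lemma rees_artinian_ext_closed : ext_closed (@rees_artinian M).
Proof. exact (subact_cc_ext_closed true). Qed.

Lemma rees_noetherian_ext_closed : ext_closed (@rees_noetherian M).
Proof. exact (subact_cc_ext_closed false). Qed.

Section Series.
Variable P : ract M -> Prop.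
Hypothesis HP : ext_closed P.

Lemma subact_full_iff {A : ract M} (B : subact A) : (forall a, B a) -> (P A <-> P (sub_act B)).
Proof.
  intros HB; split; intros H.
  - exact (ext_closed_embed HP _ _ _ (subact_incl_hom B) subact_incl_inj H).
  - apply (ext_closed_embed HP _ _ (fun a => exist _ a (HB a) : sub_act B)); [| | exact H].
    + intros a s; apply sig_val_inj; reflexivity.
    + intros a b E; exact (f_equal (@proj1_sig _ _) E).
Qed.

Lemma subact_step_iff {A : ract M} (B C : subact A) :
  (forall a, B a -> C a) ->
  P (sub_act C) <-> P (sub_act B) /\ P (rees_factor (restrict B C)).
Proof.
  intros HBC; split.
  - intros HC; split.
    + apply (ext_closed_embed HP _ _ (fun x : sub_act B =>
        exist _ (proj1_sig x) (HBC _ (proj2_sig x)) : sub_act C)); [| | exact HC].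
      * intros x s; apply sig_val_inj; reflexivity.
      * intros x y E; apply sig_val_inj; exact (f_equal (@proj1_sig _ _) E).
    + exact (ext_closed_image HP _ _ _ (rees_class_hom _ _) (rees_class_surj _ _) HC).
  - intros [HB HCB]; apply (ext_closed_ext HP _ (restrict B C)); [|exact HCB].
    apply (ext_closed_embed HP _ _ (fun y : sub_act (restrict B C) =>
      exist _ (proj1_sig (proj1_sig y)) (proj2_sig y) : sub_act B)); [| | exact HB].
    + intros y s; apply sig_val_inj; reflexivity.
    + intros x y E; do 2 apply sig_val_inj; exact (f_equal (@proj1_sig _ _) E).
Qed.

Lemma series_iff {A : ract M} (n : nat) (Af : nat -> subact A) :
  (forall i, 1 <= i < n -> forall a, Af i a -> Af (S i) a) ->
  forall k, 1 <= k <= n ->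
  (P (sub_act (Af k)) <->
   P (sub_act (Af 1)) /\
   forall i, 1 <= i <= k - 1 -> P (rees_factor (restrict (Af i) (Af (S i))))).
Proof.
  intros Hinc k; induction k as [|[|k] IH]; intros Hk; [lia | |].
  - split; [intros H; split; [exact H | intros; lia] | tauto].
  - rewrite (subact_step_iff (Af (S k)) (Af (S (S k)))) by (apply Hinc; lia).
    rewrite IH by lia; split.
    + intros [[H1 Hfac] Hlast]; split; [exact H1|].
      intros i Hi; destruct (Nat.eq_dec i (S k)) as [->|]; [exact Hlast | apply Hfac; lia].
    + intros [H1 Hfac]; repeat split; [exact H1 | intros; apply Hfac; lia | apply Hfac; lia].
Qed.

End Series.

End ChainConditions.

Arguments ext_closed {M} P.
Arguments subact_full_iff {M P} HP {A} B.
Arguments series_iff {M P} HP {A} n Af.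

Theorem mainTheorem6 (M : monoid) (A : ract M) (n : nat) (Af : nat -> subact A) :
  1 <= n ->
  (forall i, 1 <= i < n -> forall a, Af i a -> Af (S i) a) ->
  (forall a, Af n a) ->
  forall P : forall A' : ract M, Prop,
    P = @artinian M \/ P = @noetherian M \/ P = @rees_artinian M \/ P = @rees_noetherian M ->
    (P A <->
     (P (sub_act (Af 1)) /\
      forall i, 1 <= i <= n - 1 -> P (rees_factor (restrict (Af i) (Af (S i)))))).
Proof.
  intros Hn Hinc Hfull P HPchain.
  assert (HP : ext_closed P).
  { destruct HPchain as [-> | [-> | [-> | ->]]].
    - apply artinian_ext_closed.
    - apply noetherian_ext_closed.
    - apply rees_artinian_ext_closed.
    - apply rees_noetherian_ext_closed. }
  rewrite (subact_full_iff HP (Af n) Hfull).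
  exact (series_iff HP n Af Hinc n ltac:(lia)).
Qed.
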